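(* Let $\psi,\chi,\theta>0$ and $q\in(0,1)$. Let $N$ be mixed Poisson, $N\sim\mathrm{Poisson}(\Lambda)$ with $\Lambda\sim\mathrm{GIG}(\psi,\chi,\theta)$, and let $X_1,X_2,\dots$ be independent copies of $X\sim\mathrm{Geo}(1,q)$, independent of $N$; let $L=X_1+\dots+X_N$. Then $a_n=\mathbb{P}[L=n]$ satisfies \[ a_n\sim C\,\chi^{-\theta/2}D^{-\theta}(2n)^{\theta-1}z_1^{-n}\qquad(n\to\infty), \] where \[ C=\frac{\psi^{\theta/2}}{K_\theta(\sqrt{\chi\psi})},\qquad z_1=\frac{1}{1-\psi q/(2+\psi)},\qquad D=\frac{(2+\psi)(2+\psi(1-q))}{2q}. \]
   Context: $\mathrm{GIG}(\psi,\chi,\theta)$ is the generalized inverse Gaussian distribution; for $N\sim\mathrm{Poisson}(\Lambda)$ with such $\Lambda$ the probability generating function of $N$ is \[ \varphi_N(z)=\frac{\psi^{\theta/2}}{K_\theta(\sqrt{\psi\chi})}(\psi+2-2z)^{-\theta/2}K_\theta\big(\sqrt{\chi(\psi+2-2z)}\big), \] where $K_\theta$ is the modified Bessel function of the second kind. $\mathrm{Geo}(1,q)$ is the shifted geometric distribution $\mathbb{P}[X=k]=q(1-q)^{k-1}$, $k\ge1$, with probability generating function $\varphi_X(z)=\frac{qz}{1-(1-q)z}$. The probability generating function of $L$ is $\varphi_N(\varphi_X(z))$. *)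

From Stdlib Require Import Reals Factorial.
From Coquelicot Require Import Coquelicot.
Open Scope R_scope.

Definition int_0_inf (f : R -> R) : R :=
  RInt_gen f (at_right 0) (Rbar_locally p_infty).

(* Modified Bessel function of the second kind, via its standard integral
   representation  K_th(x) = 1/2 * int_0^oo t^(th-1) exp(-x (t + 1/t)/2) dt
   (valid for x > 0). *)
Definition besselK (th x : R) : R :=
  int_0_inf (fun t => / 2 * Rpower t (th - 1) * exp (- x * (t + / t) / 2)).

Definition gig_density (psi chi th x : R) : R :=
  Rpower (psi / chi) (th / 2) / (2 * besselK th (sqrt (psi * chi)))
  * Rpower x (th - 1) * exp (- (chi / x + psi * x) / 2).

Definition mixed_poisson_pmf (psi chi th : R) (k : nat) : R :=
  int_0_inf (fun l => gig_density psi chi th l * (exp (- l) * l ^ k / INR (fact k))).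

(* P[X = k] for X ~ Geo(1, q) (shifted geometric on {1,2,...}). *)
Definition geo_pmf (q : R) (k : nat) : R :=
  match k with
  | O => 0
  | S j => q * (1 - q) ^ j
  end.

Fixpoint geo_sum_pmf (q : R) (k n : nat) : R :=
  match k with
  | O => if Nat.eqb n 0 then 1 else 0
  | S k' => sum_f_R0 (fun j => geo_pmf q j * geo_sum_pmf q k' (n - j)) n
  end.

(* a_n = P[L = n], L = X_1 + ... + X_N with N independent of the i.i.d. X_i:
   law of total probability over the value of N. *)
Definition compound_pmf (psi chi th q : R) (n : nat) : R :=
  Series (fun k => mixed_poisson_pmf psi chi th k * geo_sum_pmf q k n).

(* Conditioning on [N = k + 1] and summing the negative binomial laws of the partial sums
   gives [a_(n+1) = sum_k P[N = k+1] C(n,k) q^(k+1) (1-q)^(n-k)], and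
   [P[N = k+1] = kappa / (k+1)! * int_0^oo l^(k+1) e^(-(1+psi/2) l) l^(th-1) e^(-chi/(2l)) dl].
   After the substitution [l = t / c_n] with [c_n ~ D / (2n)], the sum becomes the average of
   [t^(th-1)] against a binomial mixture of Gamma densities.  Sandwiching [t^(th-1)] between
   exponential and hyperbolic envelopes, whose mixed moments have closed forms tending to 1,
   shows that this average tends to 1; the factor [e^(-chi/(2l))] costs only [O(c_n^g)]. *)

From Stdlib Require Import Reals Lra Lia Factorial.
From Coquelicot Require Import Coquelicot.
Open Scope R_scope.

(** * Improper integrals over (0, +oo) *)

Definition is_int_0_inf (f : R -> R) (l : R) : Prop :=
  is_RInt_gen f (at_right 0) (Rbar_locally p_infty) l.

Definition continuous_pos (f : R -> R) : Prop :=
  forall x, 0 < x -> continuous f x.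

Lemma ex_RInt_continuous_pos (f : R -> R) a b :
  continuous_pos f -> 0 < a -> 0 < b -> ex_RInt f a b.
Proof.
  intros Hf Ha Hb. apply (@ex_RInt_continuous R_CompleteNormedModule).
  intros x [Hx _]. apply Hf. apply Rlt_le_trans with (2 := Hx). now apply Rmin_case.
Qed.

Lemma Rabs_lt_ball (l e v : R) : Rabs (v - l) < e -> ball l e v.
Proof. easy. Qed.

Lemma ball_Rabs_lt (l e v : R) : ball l e v -> Rabs (v - l) < e.
Proof. easy. Qed.

Lemma filter_prod_0_pinfty_box (a b : R) : 0 < a ->
  filter_prod (at_right 0) (Rbar_locally p_infty)
    (fun xy => 0 < fst xy < a /\ b < snd xy).
Proof.
  intros Ha. apply Filter_prod with (fun x => 0 < x < a) (fun y => b < y).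
  - exists (mkposreal a Ha). intros x Hx Hx0. apply ball_Rabs_lt, Rabs_def2 in Hx.
    simpl in Hx. lra.
  - now exists b.
  - now intros x y Hx Hy.
Qed.

Lemma filter_prod_0_pinfty_pos :
  filter_prod (at_right 0) (Rbar_locally p_infty)
    (fun xy => forall x, Rmin (fst xy) (snd xy) <= x -> 0 < x).
Proof.
  eapply filter_imp. 2: exact (filter_prod_0_pinfty_box 1 1 Rlt_0_1).
  intros [a b] [Ha Hb] x Hx; simpl in *.
  apply Rlt_le_trans with (2 := Hx). apply Rmin_case; lra.
Qed.

Lemma is_int_0_inf_ext (f g : R -> R) l :
  (forall x, 0 < x -> f x = g x) -> is_int_0_inf f l -> is_int_0_inf g l.
Proof.
  intros Hfg. apply is_RInt_gen_ext.
  eapply filter_imp. 2: exact filter_prod_0_pinfty_pos.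
  intros ab Hpos x Hx. apply Hfg, Hpos, Rlt_le, Hx.
Qed.

Lemma is_int_0_inf_minus (f g : R -> R) lf lg :
  is_int_0_inf f lf -> is_int_0_inf g lg -> is_int_0_inf (fun x => f x - g x) (lf - lg).
Proof. intros Hf Hg. exact (is_RInt_gen_minus f g lf lg Hf Hg). Qed.

Lemma is_int_0_inf_scal (f : R -> R) c l :
  is_int_0_inf f l -> is_int_0_inf (fun x => c * f x) (c * l).
Proof. intros Hf. exact (is_RInt_gen_scal f c l Hf). Qed.

Lemma int_0_inf_unique (f : R -> R) l : is_int_0_inf f l -> int_0_inf f = l.
Proof. intros Hf. exact (is_RInt_gen_unique f l Hf). Qed.

Lemma is_int_0_inf_ge0 (f : R -> R) l :
  (forall x, 0 < x -> 0 <= f x) -> is_int_0_inf f l -> 0 <= l.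
Proof.
  intros Hf Hl.
  assert (H : Rabs l <= l).
  { apply (@RInt_gen_norm R_CompleteNormedModule (at_right 0) (Rbar_locally p_infty) _ _
             f f l l); try exact Hl.
    - eapply filter_imp. 2: exact (filter_prod_0_pinfty_box 1 1 Rlt_0_1).
      intros [a b]; simpl; lra.
    - eapply filter_imp. 2: exact (filter_prod_0_pinfty_box 1 1 Rlt_0_1).
      intros [a b] Hab x Hx; simpl in *. apply Req_le, Rabs_pos_eq, Hf. lra. }
  apply Rle_trans with (2 := H), Rabs_pos.
Qed.

Lemma is_int_0_inf_le (f g : R -> R) lf lg :
  (forall x, 0 < x -> f x <= g x) -> is_int_0_inf f lf -> is_int_0_inf g lg -> lf <= lg.
Proof.
  intros Hfg Hf Hg.
  assert (0 <= lg - lf); [|lra].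
  apply is_int_0_inf_ge0 with (fun x => g x - f x).
  - intros x Hx. specialize (Hfg x Hx). lra.
  - now apply is_int_0_inf_minus.
Qed.

Section NonnegIntegrand.
Variable f : R -> R.
Hypothesis f_cont : continuous_pos f.
Hypothesis f_ge0 : forall x, 0 < x -> 0 <= f x.

Lemma RInt_subinterval_le a b a' b' :
  0 < a' -> a' <= a -> a <= b -> b <= b' -> RInt f a b <= RInt f a' b'.
Proof.
  intros Ha' Ha'a Hab Hbb'.
  assert (I1 : ex_RInt f a' a) by (apply ex_RInt_continuous_pos; auto; lra).
  assert (I2 : ex_RInt f a b) by (apply ex_RInt_continuous_pos; auto; lra).
  assert (I3 : ex_RInt f b b') by (apply ex_RInt_continuous_pos; auto; lra).
  assert (I4 : ex_RInt f a' b) by (apply ex_RInt_continuous_pos; auto; lra).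
  rewrite <- (RInt_Chasles f a' b b'), <- (RInt_Chasles f a' a b) by auto.
  assert (0 <= RInt f a' a) by (apply RInt_ge_0; auto; intros; apply f_ge0; lra).
  assert (0 <= RInt f b b') by (apply RInt_ge_0; auto; intros; apply f_ge0; lra).
  change plus with Rplus. lra.
Qed.

Lemma RInt_le_is_int_0_inf l a b :
  is_int_0_inf f l -> 0 < a -> a <= b -> RInt f a b <= l.
Proof.
  intros Hl Ha Hab.
  destruct (Rle_or_lt (RInt f a b) l) as [|Hlt]; auto. exfalso.
  assert (Hnear := Hl _ (locally_ball l (mkposreal _ (proj2 (Rlt_0_minus _ _) Hlt)))).
  unfold filtermapi in Hnear.
  destruct (filter_ex _ (filter_and _ _ Hnear (filter_prod_0_pinfty_box a b Ha)))
    as [[a' b'] [[y [Hy Hyl]] [Ha' Hb']]].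
  simpl in *. apply ball_Rabs_lt, Rabs_def2 in Hyl.
  apply (@is_RInt_unique R_CompleteNormedModule) in Hy. subst y.
  assert (RInt f a b <= RInt f a' b') by (apply RInt_subinterval_le; lra).
  simpl in Hyl. lra.
Qed.

(* The improper integral is the supremum of the integrals over compact subintervals. *)
Lemma is_int_0_inf_bounded M :
  (forall a b, 0 < a -> a <= b -> RInt f a b <= M) ->
  exists l, is_int_0_inf f l /\ 0 <= l <= M.
Proof.
  intros HM.
  set (E := fun y => exists a b, 0 < a /\ a <= b /\ y = RInt f a b).
  assert (E0 : E 0).
  { exists 1, 1. repeat split; try lra. now rewrite RInt_point. }
  assert (HE : bound E) by (exists M; intros y [a [b [Ha [Hab ->]]]]; auto).
  destruct (completeness E HE (ex_intro _ 0 E0)) as [l [Hub Hlub]].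
  assert (Hl : 0 <= l <= M).
  { split. now apply Hub. apply Hlub. intros y [a [b [Ha [Hab ->]]]]. auto. }
  exists l. split; [|exact Hl].
  intros P [eps Heps].
  assert (Hex : exists a b, 0 < a /\ a <= b /\ l - eps < RInt f a b).
  { apply Classical_Prop.NNPP. intros Hn.
    assert (l <= l - eps); [|destruct eps; simpl in *; lra].
    apply Hlub. intros y [a [b [Ha [Hab ->]]]].
    apply Rnot_lt_le. intros Hlt. apply Hn. now exists a, b. }
  destruct Hex as [a0 [b0 [Ha0 [Hab0 Hlt]]]].
  unfold filtermapi. eapply filter_imp. 2: exact (filter_prod_0_pinfty_box a0 b0 Ha0).
  intros [a b] [Ha Hb]; simpl in *.
  exists (RInt f a b). split.
  { apply (@RInt_correct R_CompleteNormedModule), ex_RInt_continuous_pos; auto; lra. }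
  apply Heps, Rabs_lt_ball.
  assert (RInt f a0 b0 <= RInt f a b) by (apply RInt_subinterval_le; lra).
  assert (RInt f a b <= l) by (apply Hub; exists a, b; repeat split; lra).
  apply Rabs_def1; destruct eps; simpl in *; lra.
Qed.

End NonnegIntegrand.

Lemma is_int_0_inf_dominated (f g : R -> R) lg :
  continuous_pos f -> continuous_pos g -> (forall x, 0 < x -> 0 <= f x <= g x) ->
  is_int_0_inf g lg -> exists lf, is_int_0_inf f lf /\ 0 <= lf <= lg.
Proof.
  intros Hf Hg Hfg Hlg. apply is_int_0_inf_bounded; auto.
  - intros; apply Hfg; auto.
  - intros a b Ha Hab. apply Rle_trans with (RInt g a b).
    + apply RInt_le; auto; try (apply ex_RInt_continuous_pos; auto; lra).
      intros; apply Hfg; lra.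
    + apply RInt_le_is_int_0_inf; auto.
      intros x Hx. specialize (Hfg x Hx). lra.
Qed.

Lemma is_int_0_inf_antiderivative (f F : R -> R) la lb :
  (forall x, 0 < x -> is_derive F x (f x)) -> continuous_pos f ->
  filterlim F (at_right 0) (locally la) -> filterlim F (Rbar_locally p_infty) (locally lb) ->
  is_int_0_inf f (lb - la).
Proof.
  intros HF Hf H0 Hinf.
  apply is_int_0_inf_ext with (Derive F).
  { intros x Hx. now apply is_derive_unique, HF. }
  apply (is_RInt_gen_Derive F la lb); auto.
  - eapply filter_imp. 2: exact filter_prod_0_pinfty_pos.
    intros ab Hpos x [Hx _]. eexists. now apply HF, Hpos.
  - eapply filter_imp. 2: exact filter_prod_0_pinfty_pos.
    intros ab Hpos x [Hx _]. specialize (Hpos x Hx).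
    apply continuous_ext_loc with f; [|now apply Hf].
    exists (mkposreal x Hpos). intros y Hy. apply ball_Rabs_lt, Rabs_def2 in Hy. simpl in Hy.
    symmetry. apply is_derive_unique, HF. lra.
Qed.

(** * Gamma integrals *)

(* An antiderivative of [x^k e^(-a x)], from repeated integration by parts. *)
Fixpoint pow_exp_antider (a : R) (k : nat) (x : R) : R :=
  match k with
  | O => - exp (- (a * x)) / a
  | S k' => - x ^ S k' * exp (- (a * x)) / a + INR (S k') / a * pow_exp_antider a k' x
  end.

Lemma is_derive_pow_exp_antider a k x :
  a <> 0 -> is_derive (pow_exp_antider a k) x (x ^ k * exp (- (a * x))).
Proof.
  intros Ha. induction k as [|k IH]; cbn [pow_exp_antider].
  - auto_derive; auto. field. auto.
  - assert (Hhead : is_derive (fun x => - x ^ S k * exp (- (a * x)) / a) x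
      ((- (INR (S k) * x ^ k) + a * x ^ S k) * exp (- (a * x)) / a)).
    { auto_derive; auto. rewrite S_INR. destruct k; simpl; field; auto. }
    assert (H := is_derive_plus _ _ x _ _ Hhead (is_derive_scal _ x (INR (S k) / a) _ IH)).
    match type of H with is_derive _ _ ?l => replace (x ^ S k * exp (- (a * x))) with l end.
    + exact H.
    + unfold plus; simpl. field. auto.
Qed.

Lemma pow_exp_antider_0 a k : a <> 0 -> pow_exp_antider a k 0 = - INR (fact k) / a ^ S k.
Proof.
  intros Ha. induction k as [|k IH]; cbn [pow_exp_antider].
  - rewrite Rmult_0_r, Ropp_0, exp_0. simpl. field. auto.
  - rewrite IH. change (fact (S k)) with (S k * fact k)%nat. rewrite mult_INR.
    replace (0 ^ S k) with 0 by (simpl; ring).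
    simpl pow. field. split; auto. now apply pow_nonzero.
Qed.

Lemma pow_div_fact_le_exp y n : 0 <= y -> y ^ S n / INR (fact (S n)) <= exp y.
Proof.
  intros Hy. apply Rle_trans with (2 := exp_ge_taylor y (S n) Hy). rewrite tech5.
  assert (0 <= sum_f_R0 (fun k => y ^ k / INR (fact k)) n); [|lra].
  apply cond_pos_sum. intros k. apply Rdiv_le_0_compat.
  - now apply pow_le.
  - apply lt_0_INR, lt_O_fact.
Qed.

Lemma pow_exp_le a j x : 0 < a -> 0 < x ->
  x ^ j * exp (- (a * x)) <= INR (fact (S j)) / a ^ S j * / x.
Proof.
  intros Ha Hx.
  assert (Hf : 0 < INR (fact (S j))) by apply lt_0_INR, lt_O_fact.
  assert (Haj : 0 < a ^ S j) by now apply pow_lt.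
  replace (x ^ j * exp (- (a * x)))
    with ((a * x) ^ S j / INR (fact (S j)) * exp (- (a * x)) * (INR (fact (S j)) / a ^ S j * / x))
    by (rewrite Rpow_mult_distr, <- (tech_pow_Rmult x j); field; lra).
  rewrite <- (Rmult_1_l (INR (fact (S j)) / a ^ S j * / x)) at 2.
  apply Rmult_le_compat_r.
  - apply Rmult_le_pos; [apply Rlt_le, Rdiv_lt_0_compat | apply Rlt_le, Rinv_0_lt_compat]; lra.
  - rewrite <- (exp_0), <- (Rplus_opp_r (a * x)), exp_plus.
    apply Rmult_le_compat_r; [apply Rlt_le, exp_pos|].
    apply pow_div_fact_le_exp. nra.
Qed.

Lemma is_lim_pow_exp a j : 0 < a -> is_lim (fun x => x ^ j * exp (- (a * x))) p_infty 0.
Proof.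
  intros Ha.
  apply is_lim_le_le_loc with (fun _ => 0) (fun x => INR (fact (S j)) / a ^ S j * / x).
  - exists 0. intros x Hx. split.
    + apply Rmult_le_pos. apply pow_le; lra. apply Rlt_le, exp_pos.
    + now apply pow_exp_le.
  - apply is_lim_const.
  - replace (Finite 0) with (Rbar_mult (INR (fact (S j)) / a ^ S j) (Rbar_inv p_infty))
      by (simpl; f_equal; ring).
    apply is_lim_scal_l, is_lim_inv; [apply is_lim_id | discriminate].
Qed.

Lemma is_lim_pow_exp_antider a k : 0 < a -> is_lim (pow_exp_antider a k) p_infty 0.
Proof.
  intros Ha.
  assert (Hterm : forall j, is_lim (fun x => - / a * (x ^ j * exp (- (a * x)))) p_infty 0).
  { intros j. replace (Finite 0) with (Rbar_mult (- / a) 0) by (simpl; f_equal; ring).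
    now apply is_lim_scal_l, is_lim_pow_exp. }
  induction k as [|k IH]; cbn [pow_exp_antider].
  - apply is_lim_ext with (2 := Hterm 0%nat). intros x. field. lra.
  - apply is_lim_ext with
      (fun x => - / a * (x ^ S k * exp (- (a * x))) + INR (S k) / a * pow_exp_antider a k x).
    { intros x. field. lra. }
    replace 0 with (0 + INR (S k) / a * 0) by ring.
    apply is_lim_plus'; [apply Hterm|].
    replace (Finite (INR (S k) / a * 0)) with (Rbar_mult (INR (S k) / a) 0) by reflexivity.
    now apply is_lim_scal_l.
Qed.

Lemma continuous_pos_pow_exp a j : continuous_pos (fun x => x ^ j * exp (- (a * x))).
Proof. intros x _. apply (@ex_derive_continuous R_AbsRing R_NormedModule). auto_derive. auto. Qed.

Lemma is_int_0_inf_pow_exp a k : 0 < a ->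
  is_int_0_inf (fun x => x ^ k * exp (- (a * x))) (INR (fact k) / a ^ S k).
Proof.
  intros Ha.
  replace (INR (fact k) / a ^ S k) with (0 - pow_exp_antider a k 0)
    by (rewrite pow_exp_antider_0 by lra; field; apply pow_nonzero; lra).
  apply is_int_0_inf_antiderivative with (pow_exp_antider a k).
  - intros; apply is_derive_pow_exp_antider; lra.
  - apply continuous_pos_pow_exp.
  - assert (Hc : continuous (pow_exp_antider a k) 0).
    { apply (@ex_derive_continuous R_AbsRing R_NormedModule).
      eexists. apply is_derive_pow_exp_antider; lra. }
    intros P HP. unfold filtermap, at_right, within.
    eapply filter_imp; [|exact (Hc P HP)]. now intros x Hx _.
  - now apply is_lim_pow_exp_antider.
Qed.

(** * Envelopes of real powers *)

Lemma exp_le_compat x y : x <= y -> exp x <= exp y.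
Proof. intros [H|H]; [left; now apply exp_increasing | now rewrite H; right]. Qed.

Lemma exp_neg_le_inv u : 0 < u -> exp (- u) <= / u.
Proof.
  intros Hu. rewrite exp_Ropp. apply Rinv_le_contravar; auto.
  assert (H := exp_ineq1_le u). lra.
Qed.

Lemma Rpower_opp_mult_Rpower y z : 0 < y -> Rpower y (- z) * Rpower y z = 1.
Proof. intros Hy. rewrite <- Rpower_plus, Rplus_opp_l. now apply Rpower_O. Qed.

Lemma Rpower_div a b y : 0 < a -> 0 < b -> Rpower (a / b) y = Rpower a y * Rpower b (- y).
Proof.
  intros Ha Hb. unfold Rpower. rewrite <- exp_plus. f_equal. unfold Rdiv.
  rewrite ln_mult, ln_Rinv by (try apply Rinv_0_lt_compat; lra). ring.
Qed.

Lemma ln_le_sub_1 t : 0 < t -> ln t <= t - 1.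
Proof. intros Ht. assert (H := exp_ineq1_le (ln t)). rewrite exp_ln in H; lra. Qed.

Lemma Rpower_le_exp t s : 0 < t -> 0 <= s -> Rpower t s <= exp (s * (t - 1)).
Proof.
  intros Ht Hs. apply exp_le_compat, Rmult_le_compat_l; [lra | now apply ln_le_sub_1].
Qed.

Lemma exp_le_Rpower t s : 0 < t -> s <= 0 -> exp (s * (t - 1)) <= Rpower t s.
Proof.
  intros Ht Hs. apply exp_le_compat, Rmult_le_compat_neg_l; [lra | now apply ln_le_sub_1].
Qed.

Lemma Rpower_ge_hyperbolic t s : 0 < t -> 0 <= s -> 1 + s * (1 - / t) <= Rpower t s.
Proof.
  intros Ht Hs.
  assert (H : 1 - / t <= ln t).
  { assert (H := ln_le_sub_1 (/ t) (Rinv_0_lt_compat _ Ht)). rewrite ln_Rinv in H; lra. }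
  apply Rle_trans with (2 := exp_ineq1_le (s * ln t)).
  apply Rplus_le_compat_l, Rmult_le_compat_l; lra.
Qed.

(* Concavity of [ln], through [ln y <= y - 1] at [y = t/m] and [y = 1/m]. *)
Lemma Rpower_le_convex_comb t a : 0 < t -> 0 < a < 1 -> Rpower t a <= a * t + (1 - a).
Proof.
  intros Ht Ha. set (m := a * t + (1 - a)).
  assert (Hm : 0 < m) by (unfold m; nra).
  assert (H1 := ln_le_sub_1 (t / m) (Rdiv_lt_0_compat _ _ Ht Hm)).
  assert (H2 := ln_le_sub_1 (/ m) (Rinv_0_lt_compat _ Hm)).
  unfold Rdiv in H1. rewrite ln_mult, ln_Rinv in H1 by (try apply Rinv_0_lt_compat; lra).
  rewrite ln_Rinv in H2 by lra.
  assert (Hs : a * (t / m - 1) + (1 - a) * (/ m - 1) = 0) by (unfold m in *; field; lra).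
  assert (a * (ln t - ln m) <= a * (t / m - 1)) by (apply Rmult_le_compat_l; lra).
  assert ((1 - a) * (- ln m) <= (1 - a) * (/ m - 1)) by (apply Rmult_le_compat_l; lra).
  unfold Rpower. rewrite <- (exp_ln m) by lra. apply exp_le_compat. lra.
Qed.

Lemma Rpower_le_hyperbolic t s : 0 < t -> -1 < s < 0 -> Rpower t s <= (1 + s) - s / t.
Proof.
  intros Ht Hs.
  assert (H := Rpower_le_convex_comb t (1 + s) Ht ltac:(lra)).
  replace s with ((1 + s) + - (1)) at 1 by ring.
  rewrite Rpower_plus, Rpower_Ropp, Rpower_1 by auto.
  apply Rmult_le_reg_r with t; auto.
  rewrite Rmult_assoc, Rinv_l by lra.
  replace ((1 + s - s / t) * t) with ((1 + s) * t + (1 - (1 + s))) by (field; lra).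
  lra.
Qed.

Lemma one_sub_exp_le_Rpower u g : 0 < u -> 0 < g <= 1 -> 1 - exp (- u) <= Rpower u g.
Proof.
  intros Hu Hg. assert (He := exp_ineq1_le (- u)). assert (Hp := exp_pos (- u)).
  unfold Rpower. destruct (Rle_or_lt 1 u) as [H1|H1].
  - assert (0 <= ln u) by (rewrite <- ln_1; apply ln_le; lra).
    assert (H2 := exp_ineq1_le (g * ln u)). nra.
  - assert (ln u < 0) by (rewrite <- ln_1; apply ln_increasing; lra).
    assert (H2 : exp (ln u) <= exp (g * ln u)) by (apply exp_le_compat; nra).
    rewrite exp_ln in H2 by lra. lra.
Qed.

(* Envelopes of [t ^ sg] whose integrals against [t^k e^(-a t)] have closed forms. *)
Definition pow_upper (sg t : R) : R :=
  if Rle_dec 0 sg then exp (sg * (t - 1)) else (1 + sg) - sg / t.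
Definition pow_lower (sg t : R) : R :=
  if Rle_dec 0 sg then 1 + sg * (1 - / t) else exp (sg * (t - 1)).

Lemma Rpower_le_pow_upper sg t : -1 < sg -> 0 < t -> Rpower t sg <= pow_upper sg t.
Proof.
  intros Hsg Ht. unfold pow_upper. destruct (Rle_dec 0 sg).
  - now apply Rpower_le_exp.
  - apply Rpower_le_hyperbolic; lra.
Qed.

Lemma pow_lower_le_Rpower sg t : 0 < t -> pow_lower sg t <= Rpower t sg.
Proof.
  intros Ht. unfold pow_lower. destruct (Rle_dec 0 sg).
  - now apply Rpower_ge_hyperbolic.
  - apply exp_le_Rpower; lra.
Qed.

Section EnvelopeMoments.
Variable al : R.
Hypothesis al_gt0 : 0 < al.

Definition hyperbolic_moment (sg c : R) (k : nat) : R :=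
  (1 + sg) * (INR (fact (S k)) / al ^ S (S k)) - sg / c * (INR (fact k) / al ^ S k).
Definition exp_moment (sg c : R) (k : nat) : R :=
  exp (- sg) * (INR (fact (S k)) / (al - sg * c) ^ S (S k)).

Definition upper_moment (sg c : R) (k : nat) : R :=
  if Rle_dec 0 sg then exp_moment sg c k else hyperbolic_moment sg c k.
Definition lower_moment (sg c : R) (k : nat) : R :=
  if Rle_dec 0 sg then hyperbolic_moment sg c k else exp_moment sg c k.

Lemma is_int_0_inf_hyperbolic sg c k : 0 < c ->
  is_int_0_inf (fun x => x ^ S k * exp (- (al * x)) * ((1 + sg) - sg / (c * x)))
    (hyperbolic_moment sg c k).
Proof.
  intros Hc.
  apply is_int_0_inf_ext with (fun x => (1 + sg) * (x ^ S k * exp (- (al * x)))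
                                         - sg / c * (x ^ k * exp (- (al * x)))).
  { intros x Hx. simpl. field. lra. }
  apply is_int_0_inf_minus; apply is_int_0_inf_scal, is_int_0_inf_pow_exp; auto.
Qed.

Lemma is_int_0_inf_exp sg c k : sg * c < al ->
  is_int_0_inf (fun x => x ^ S k * exp (- (al * x)) * exp (sg * (c * x - 1))) (exp_moment sg c k).
Proof.
  intros Hsc.
  apply is_int_0_inf_ext with (fun x => exp (- sg) * (x ^ S k * exp (- ((al - sg * c) * x)))).
  { intros x Hx.
    replace (exp (- ((al - sg * c) * x))) with (exp (- (al * x)) * exp (sg * (c * x - 1)) * exp sg)
      by (rewrite <- !exp_plus; f_equal; ring).
    rewrite exp_Ropp. field. apply Rgt_not_eq, exp_pos. }
  apply is_int_0_inf_scal, is_int_0_inf_pow_exp. lra.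
Qed.

Lemma is_int_0_inf_pow_upper sg c k : 0 < c -> sg * c < al ->
  is_int_0_inf (fun x => x ^ S k * exp (- (al * x)) * pow_upper sg (c * x)) (upper_moment sg c k).
Proof.
  intros Hc Hsc. unfold upper_moment, pow_upper. destruct (Rle_dec 0 sg).
  - now apply is_int_0_inf_exp.
  - now apply is_int_0_inf_hyperbolic.
Qed.

Lemma is_int_0_inf_pow_lower sg c k : 0 < c -> sg * c < al ->
  is_int_0_inf (fun x => x ^ S k * exp (- (al * x)) * pow_lower sg (c * x)) (lower_moment sg c k).
Proof.
  intros Hc Hsc. unfold lower_moment, pow_lower. destruct (Rle_dec 0 sg).
  - eapply is_int_0_inf_ext; [|now apply is_int_0_inf_hyperbolic].
    intros x Hx. simpl. f_equal. field. lra.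
  - now apply is_int_0_inf_exp.
Qed.

Lemma continuous_pos_pow_upper sg c k : 0 < c ->
  continuous_pos (fun x => x ^ S k * exp (- (al * x)) * pow_upper sg (c * x)).
Proof.
  intros Hc x Hx. apply (@ex_derive_continuous R_AbsRing R_NormedModule).
  unfold pow_upper. destruct (Rle_dec 0 sg); auto_derive; auto. nra.
Qed.

End EnvelopeMoments.

(** * The integrand of the mixed Poisson probabilities *)

(* Any [0 < g <= 1] with [s - g > -1] would do: the factor [e^(-b/x)] is traded for
   [1 - (b/x)^g], whose correction term is of order [c^g] after rescaling by [c]. *)
Definition shift_exponent (s : R) : R := (s + 1) / (s + 2).

Section GigIntegrand.
Variables s al be : R.
Hypothesis s_gt : -1 < s.
Hypothesis al_gt0 : 0 < al.
Hypothesis be_gt0 : 0 < be.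

Definition gig_integrand (k : nat) (x : R) : R :=
  x ^ S k * exp (- (al * x)) * (Rpower x s * exp (- (be / x))).

Let g := shift_exponent s.

Lemma shift_exponent_bounds : 0 < g <= 1.
Proof.
  unfold g, shift_exponent. split.
  - apply Rdiv_lt_0_compat; lra.
  - apply Rmult_le_reg_r with (s + 2); [lra|]. field_simplify; lra.
Qed.

Lemma sub_shift_exponent_gt : -1 < s - g.
Proof.
  unfold g, shift_exponent.
  assert ((s + 1) / (s + 2) < s + 1); [|lra].
  apply Rmult_lt_reg_r with (s + 2); [lra|]. field_simplify; nra.
Qed.

Lemma continuous_pos_gig_integrand k : continuous_pos (gig_integrand k).
Proof.
  intros x Hx. apply (@ex_derive_continuous R_AbsRing R_NormedModule).
  unfold gig_integrand, Rpower. auto_derive. repeat split; lra.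
Qed.

Lemma gig_integrand_ge0 k x : 0 < x -> 0 <= gig_integrand k x.
Proof.
  intros Hx. unfold gig_integrand.
  assert (0 < exp (- (al * x))) by apply exp_pos.
  assert (0 < Rpower x s) by apply exp_pos.
  assert (0 < exp (- (be / x))) by apply exp_pos.
  assert (0 < x ^ S k) by now apply pow_lt.
  apply Rmult_le_pos; apply Rmult_le_pos; lra.
Qed.

Lemma Rpower_rescale c x : 0 < c -> 0 < x -> Rpower x s = Rpower c (- s) * Rpower (c * x) s.
Proof.
  intros Hc Hx. rewrite <- Rpower_mult_distr, Rpower_Ropp by auto.
  field. apply Rgt_not_eq, exp_pos.
Qed.

Lemma Rpower_exp_inv_le_upper c x : 0 < c -> 0 < x ->
  Rpower (c * x) s * exp (- (be / x)) <= pow_upper s (c * x).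
Proof.
  intros Hc Hx.
  assert (H1 := Rpower_le_pow_upper s (c * x) s_gt ltac:(nra)).
  assert (H2 : exp (- (be / x)) <= 1).
  { rewrite <- exp_0. apply exp_le_compat.
    assert (0 < be / x) by now apply Rdiv_lt_0_compat. lra. }
  assert (0 < Rpower (c * x) s) by apply exp_pos.
  nra.
Qed.

Lemma lower_le_Rpower_exp_inv c x : 0 < c -> 0 < x ->
  pow_lower s (c * x) - Rpower (be * c) g * pow_upper (s - g) (c * x)
  <= Rpower (c * x) s * exp (- (be / x)).
Proof.
  intros Hc Hx. set (t := c * x). assert (Ht : 0 < t) by (unfold t; nra).
  assert (Hg := shift_exponent_bounds).
  assert (Hlo := pow_lower_le_Rpower s t Ht).
  assert (Hup := Rpower_le_pow_upper (s - g) t sub_shift_exponent_gt Ht).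
  assert (Hexp := one_sub_exp_le_Rpower (be / x) g ltac:(now apply Rdiv_lt_0_compat) Hg).
  assert (Hsplit : Rpower t s * Rpower (be / x) g = Rpower (be * c) g * Rpower t (s - g)).
  { replace (be / x) with ((be * c) * / t) by (unfold t; field; lra).
    rewrite <- Rpower_mult_distr by (try apply Rinv_0_lt_compat; nra).
    replace (/ t) with (Rpower t (- (1))) by (rewrite Rpower_Ropp, Rpower_1; auto).
    rewrite Rpower_mult.
    replace (s - g) with (s + - (1) * g) by ring. rewrite Rpower_plus. ring. }
  assert (0 < Rpower t s) by apply exp_pos.
  assert (0 < Rpower (be * c) g) by apply exp_pos.
  assert (Rpower t s * (1 - exp (- (be / x))) <= Rpower t s * Rpower (be / x) g)
    by (apply Rmult_le_compat_l; lra).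
  assert (Rpower (be * c) g * Rpower t (s - g) <= Rpower (be * c) g * pow_upper (s - g) t)
    by (apply Rmult_le_compat_l; lra).
  nra.
Qed.

Lemma gig_integrand_le_envelope c k x : 0 < c -> 0 < x ->
  gig_integrand k x <= Rpower c (- s) * (x ^ S k * exp (- (al * x)) * pow_upper s (c * x)).
Proof.
  intros Hc Hx. unfold gig_integrand. rewrite (Rpower_rescale c x) by auto.
  assert (H := Rpower_exp_inv_le_upper c x Hc Hx).
  assert (0 < Rpower c (- s)) by apply exp_pos.
  assert (0 < x ^ S k * exp (- (al * x)))
    by (apply Rmult_lt_0_compat; [now apply pow_lt | apply exp_pos]).
  apply Rmult_le_compat_l with (r := Rpower c (- s) * (x ^ S k * exp (- (al * x)))) in H; nra.
Qed.

Lemma envelope_le_gig_integrand c k x : 0 < c -> 0 < x ->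
  Rpower c (- s) * (x ^ S k * exp (- (al * x)) * pow_lower s (c * x)
    - Rpower (be * c) g * (x ^ S k * exp (- (al * x)) * pow_upper (s - g) (c * x)))
  <= gig_integrand k x.
Proof.
  intros Hc Hx. unfold gig_integrand. rewrite (Rpower_rescale c x) by auto.
  assert (H := lower_le_Rpower_exp_inv c x Hc Hx).
  assert (0 < Rpower c (- s)) by apply exp_pos.
  assert (0 < x ^ S k * exp (- (al * x)))
    by (apply Rmult_lt_0_compat; [now apply pow_lt | apply exp_pos]).
  apply Rmult_le_compat_l with (r := Rpower c (- s) * (x ^ S k * exp (- (al * x)))) in H; nra.
Qed.

Lemma ex_is_int_0_inf_gig_integrand k : exists v, is_int_0_inf (gig_integrand k) v.
Proof.
  set (c := al / (Rabs s + 1)).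
  assert (Hs : 0 <= Rabs s) by apply Rabs_pos.
  assert (Hc : 0 < c) by (apply Rdiv_lt_0_compat; lra).
  assert (Hsc : s * c < al).
  { apply Rle_lt_trans with (Rabs s * c).
    - apply Rmult_le_compat_r; [lra | apply Rle_abs].
    - unfold c. apply Rmult_lt_reg_r with (Rabs s + 1); [lra|]. field_simplify; lra. }
  destruct (is_int_0_inf_dominated (gig_integrand k)
      (fun x => Rpower c (- s) * (x ^ S k * exp (- (al * x)) * pow_upper s (c * x)))
      (Rpower c (- s) * upper_moment al s c k)) as [v [Hv _]].
  - apply continuous_pos_gig_integrand.
  - intros x Hx. apply (@continuous_scal_r R_UniformSpace R_AbsRing R_NormedModule).
    now apply continuous_pos_pow_upper.
  - intros x Hx. split; [now apply gig_integrand_ge0 | now apply gig_integrand_le_envelope].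
  - now apply is_int_0_inf_scal, is_int_0_inf_pow_upper.
  - now exists v.
Qed.

Lemma gig_integral_le c k v : 0 < c -> s * c < al -> is_int_0_inf (gig_integrand k) v ->
  v <= Rpower c (- s) * upper_moment al s c k.
Proof.
  intros Hc Hsc Hv.
  apply is_int_0_inf_le with (2 := Hv)
    (g := fun x => Rpower c (- s) * (x ^ S k * exp (- (al * x)) * pow_upper s (c * x))).
  - intros x Hx. now apply gig_integrand_le_envelope.
  - now apply is_int_0_inf_scal, is_int_0_inf_pow_upper.
Qed.

Lemma gig_integral_ge c k v : 0 < c -> s * c < al -> is_int_0_inf (gig_integrand k) v ->
  Rpower c (- s) * (lower_moment al s c k - Rpower (be * c) g * upper_moment al (s - g) c k) <= v.
Proof.
  intros Hc Hsc Hv.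
  assert (Hsgc : (s - g) * c < al) by (assert (H := shift_exponent_bounds); nra).
  apply is_int_0_inf_le with (3 := Hv) (f := fun x =>
    Rpower c (- s) * (x ^ S k * exp (- (al * x)) * pow_lower s (c * x)
      - Rpower (be * c) g * (x ^ S k * exp (- (al * x)) * pow_upper (s - g) (c * x)))).
  - intros x Hx. now apply envelope_le_gig_integrand.
  - apply is_int_0_inf_scal, is_int_0_inf_minus.
    + now apply is_int_0_inf_pow_lower.
    + now apply is_int_0_inf_scal, is_int_0_inf_pow_upper.
Qed.

End GigIntegrand.

Definition besselK_integrand (th x t : R) : R :=
  / 2 * Rpower t (th - 1) * exp (- x * (t + / t) / 2).

(* [e^(-x/(4t)) <= 4t/x] supplies the extra factor [t] of a GIG integrand. *)
Lemma besselK_integrand_le th x t : 0 < x -> 0 < t ->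
  besselK_integrand th x t <= 2 / x * gig_integrand (th - 1) (x / 2) (x / 4) 0 t.
Proof.
  intros Hx Ht. unfold besselK_integrand, gig_integrand.
  set (A := exp (- (x / 2 * t))). set (B := exp (- (x / 4 / t))).
  replace (exp (- x * (t + / t) / 2)) with (A * B * exp (- (x / (4 * t))))
    by (unfold A, B; rewrite <- !exp_plus; f_equal; field; lra).
  assert (HC : exp (- (x / (4 * t))) <= 4 * t / x).
  { eapply Rle_trans; [apply exp_neg_le_inv, Rdiv_lt_0_compat; lra | right; field; lra]. }
  assert (0 < / 2 * Rpower t (th - 1) * (A * B)).
  { apply Rmult_lt_0_compat; [apply Rmult_lt_0_compat; [lra | apply exp_pos]|].
    apply Rmult_lt_0_compat; apply exp_pos. }
  replace (2 / x * (t ^ 1 * A * (Rpower t (th - 1) * B)))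
    with (/ 2 * Rpower t (th - 1) * (A * B) * (4 * t / x)) by (simpl; field; lra).
  rewrite <- (Rmult_assoc _ (A * B)).
  apply Rmult_le_compat_l; lra.
Qed.

Lemma besselK_pos th x : 0 < th -> 0 < x -> 0 < besselK th x.
Proof.
  intros Hth Hx.
  assert (Hc : continuous_pos (besselK_integrand th x)).
  { intros t Ht. apply (@ex_derive_continuous R_AbsRing R_NormedModule).
    unfold besselK_integrand, Rpower. auto_derive. repeat split; lra. }
  assert (Hpos : forall t, 0 < t -> 0 < besselK_integrand th x t).
  { intros t Ht. unfold besselK_integrand.
    apply Rmult_lt_0_compat; [apply Rmult_lt_0_compat; [lra|]|]; apply exp_pos. }
  destruct (ex_is_int_0_inf_gig_integrand (th - 1) (x / 2) (x / 4)
              ltac:(lra) ltac:(lra) ltac:(lra) 0) as [v Hv].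
  destruct (is_int_0_inf_dominated (besselK_integrand th x)
      (fun t => 2 / x * gig_integrand (th - 1) (x / 2) (x / 4) 0 t) (2 / x * v)) as [l [Hl _]].
  - exact Hc.
  - intros t Ht. apply (@continuous_scal_r R_UniformSpace R_AbsRing R_NormedModule).
    apply continuous_pos_gig_integrand; lra.
  - intros t Ht. split; [now apply Rlt_le, Hpos | now apply besselK_integrand_le].
  - now apply is_int_0_inf_scal.
  - unfold besselK. fold (besselK_integrand th x). rewrite (int_0_inf_unique _ l Hl).
    apply Rlt_le_trans with (RInt (besselK_integrand th x) 1 2).
    + apply RInt_gt_0; [lra | intros; apply Hpos; lra | intros; apply Hc; lra].
    + apply RInt_le_is_int_0_inf; auto; [intros; now apply Rlt_le, Hpos | lra | lra].
Qed.

(** * The compound probabilities as a finite sum *)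

(* Pascal's rule; unlike [Binomial.C n k], this vanishes for [k > n]. *)
Fixpoint binom (n k : nat) : R :=
  match n, k with
  | _, O => 1
  | O, S _ => 0
  | S n', S k' => binom n' k' + binom n' (S k')
  end.

Lemma binom_0_r n : binom n 0 = 1.
Proof. now destruct n. Qed.

Lemma binom_gt n k : (n < k)%nat -> binom n k = 0.
Proof.
  revert k; induction n as [|n IH]; intros k Hk.
  - destruct k; [lia | reflexivity].
  - destruct k as [|k]; [lia|]. simpl. rewrite !IH by lia. ring.
Qed.

Lemma binom_C n k : (k <= n)%nat -> binom n k = Binomial.C n k.
Proof.
  revert k; induction n as [|n IH]; intros k Hk.
  - destruct k; [|lia]. unfold Binomial.C. simpl. field.
  - destruct k as [|k]; [now rewrite C_n_0|]. simpl.
    destruct (Nat.eq_dec k n) as [->|Hne].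
    + rewrite (binom_gt n (S n)), IH, !C_n_n by lia. ring.
    + rewrite !IH by lia. apply pascal. lia.
Qed.

Lemma binom_ge0 n k : 0 <= binom n k.
Proof.
  revert k; induction n as [|n IH]; intros k.
  - destruct k; simpl; lra.
  - destruct k; simpl; [lra|]. specialize (IH k) as H1. specialize (IH (S k)) as H2. lra.
Qed.

Lemma binomial_binom (x y : R) n :
  sum_f_R0 (fun k => binom n k * x ^ k * y ^ (n - k)) n = (x + y) ^ n.
Proof. rewrite binomial. apply sum_eq. intros i Hi. now rewrite binom_C. Qed.

Lemma binom_absorb n k : (k <= n)%nat -> binom (S n) (S k) * INR (S k) = INR (S n) * binom n k.
Proof.
  intros Hk. rewrite !binom_C by lia. unfold Binomial.C.
  replace (S n - S k)%nat with (n - k)%nat by lia.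
  change (fact (S n)) with (S n * fact n)%nat. change (fact (S k)) with (S k * fact k)%nat.
  rewrite !mult_INR. field.
  repeat split; try (apply not_0_INR; lia); apply INR_fact_neq_0.
Qed.

Lemma sum_binom_pow n p y :
  sum_f_R0 (fun k => binom n k * p ^ k * (1 - p) ^ (n - k) * y ^ S (S k)) n
  = y ^ 2 * (1 - p + p * y) ^ n.
Proof.
  replace (1 - p + p * y) with (p * y + (1 - p)) by ring.
  rewrite <- binomial_binom, scal_sum. apply sum_eq. intros i Hi.
  rewrite Rpow_mult_distr. simpl. ring.
Qed.

Lemma sum_binom_div_succ n p : 0 < p ->
  sum_f_R0 (fun k => binom n k * p ^ k * (1 - p) ^ (n - k) / INR (S k)) n
  = (1 - (1 - p) ^ S n) / (INR (S n) * p).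
Proof.
  intros Hp.
  assert (H := binomial_binom p (1 - p) (S n)).
  replace (p + (1 - p)) with 1 in H by ring. rewrite pow1, decomp_sum in H by lia.
  simpl pred in H. rewrite binom_0_r, Nat.sub_0_r, pow_O, !Rmult_1_l in H.
  assert (E : sum_f_R0 (fun i => binom (S n) (S i) * p ^ S i * (1 - p) ^ (S n - S i)) n
             = INR (S n) * p
               * sum_f_R0 (fun k => binom n k * p ^ k * (1 - p) ^ (n - k) / INR (S k)) n).
  { rewrite scal_sum. apply sum_eq. intros i Hi.
    replace (S n - S i)%nat with (n - i)%nat by lia.
    assert (HS : INR (S i) <> 0) by (apply not_0_INR; lia).
    replace (binom (S n) (S i)) with (INR (S n) * binom n i / INR (S i))
      by (rewrite <- binom_absorb by lia; field; auto).
    simpl. field. auto. }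
  rewrite E in H.
  assert (HSn : 0 < INR (S n)) by (apply lt_0_INR; lia).
  apply Rmult_eq_reg_l with (INR (S n) * p); [|nra].
  field_simplify; [|nra]. lra.
Qed.

Lemma geo_sum_pmf_rec q k n :
  geo_sum_pmf q (S k) (S (S n))
  = q * geo_sum_pmf q k (S n) + (1 - q) * geo_sum_pmf q (S k) (S n).
Proof.
  cbn [geo_sum_pmf].
  rewrite decomp_sum by lia. simpl pred.
  rewrite decomp_sum by lia. simpl pred.
  rewrite (decomp_sum (fun j => geo_pmf q j * geo_sum_pmf q k (S n - j)) (S n)) by lia.
  simpl pred. replace (S (S n) - 1)%nat with (S n) by lia.
  assert (E : sum_f_R0 (fun i => geo_pmf q (S (S i)) * geo_sum_pmf q k (S (S n) - S (S i))) n
            = (1 - q) * sum_f_R0 (fun i => geo_pmf q (S i) * geo_sum_pmf q k (S n - S i)) n).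
  { rewrite scal_sum. apply sum_eq. intros i Hi.
    replace (S (S n) - S (S i))%nat with (S n - S i)%nat by lia. simpl. ring. }
  rewrite E. simpl geo_pmf. ring.
Qed.

Lemma geo_sum_pmf_closed q k n :
  geo_sum_pmf q (S k) (S n) = binom n k * q ^ S k * (1 - q) ^ (n - k).
Proof.
  revert k; induction n as [|n IH]; intros k.
  - cbn [geo_sum_pmf sum_f_R0]. simpl geo_pmf. simpl Nat.sub.
    destruct k; simpl; ring.
  - rewrite geo_sum_pmf_rec, IH. destruct k as [|k].
    + rewrite !binom_0_r, !Nat.sub_0_r. simpl. ring.
    + rewrite IH. simpl binom.
      destruct (Compare_dec.le_lt_dec (S k) n) as [Hk|Hk].
      * replace (n - k)%nat with (S (n - S k)) by lia.
        replace (S n - S k)%nat with (S (n - S k)) by lia. simpl. ring.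
      * rewrite (binom_gt n (S k)) by lia.
        replace (S n - S k)%nat with (n - k)%nat by lia. simpl. ring.
Qed.

Lemma Series_finite_support (a : nat -> R) N :
  (forall k, (N < k)%nat -> a k = 0) -> Series a = sum_f_R0 a N.
Proof.
  intros H. apply is_series_unique. intros P HP. exists N. intros m Hm.
  rewrite sum_n_Reals.
  replace (sum_f_R0 a m) with (sum_f_R0 a N); [now apply locally_singleton|].
  induction Hm; [reflexivity|]. simpl. rewrite <- IHHm, H by lia. ring.
Qed.

Lemma compound_pmf_S psi chi th q n :
  compound_pmf psi chi th q (S n) =
  sum_f_R0 (fun k => mixed_poisson_pmf psi chi th (S k)
                     * (binom n k * q ^ S k * (1 - q) ^ (n - k))) n.
Proof.
  unfold compound_pmf. rewrite (Series_finite_support _ (S n)).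
  - rewrite decomp_sum by lia. simpl pred. simpl geo_sum_pmf at 1.
    rewrite Rmult_0_r, Rplus_0_l.
    apply sum_eq. intros i Hi. now rewrite geo_sum_pmf_closed.
  - intros k Hk. destruct k as [|k]; [lia|]. rewrite geo_sum_pmf_closed, binom_gt by lia. ring.
Qed.

(** * Limits of sequences *)

Lemma is_lim_seq_div_succ c : is_lim_seq (fun n => c / INR (S n)) 0.
Proof.
  replace (Finite 0) with (Rbar_mult c (Rbar_inv p_infty)) by (simpl; f_equal; ring).
  apply is_lim_seq_scal_l, is_lim_seq_inv; [|discriminate].
  apply (is_lim_seq_incr_1 INR p_infty), is_lim_seq_INR.
Qed.

Lemma is_lim_seq_INR_div_succ : is_lim_seq (fun n => INR n / INR (S n)) 1.
Proof.
  apply is_lim_seq_ext with (fun n => 1 - 1 / INR (S n)).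
  { intros n. rewrite S_INR. field. assert (0 <= INR n) by apply pos_INR. lra. }
  replace (Finite 1) with (Finite (1 - 0)) by (f_equal; ring).
  apply is_lim_seq_minus'; [apply is_lim_seq_const | apply is_lim_seq_div_succ].
Qed.

Lemma exp_INR_mult u n : exp (INR n * u) = exp u ^ n.
Proof.
  induction n as [|n IH]; [simpl; now rewrite Rmult_0_l, exp_0|].
  rewrite S_INR, Rmult_plus_distr_r, Rmult_1_l, exp_plus, IH. simpl. ring.
Qed.

Lemma pow_le_exp w n : -1 <= w -> (1 + w) ^ n <= exp (INR n * w).
Proof.
  intros Hw. rewrite exp_INR_mult. apply pow_incr. split; [lra | apply exp_ineq1_le].
Qed.

Lemma exp_le_pow w n : -1 < w -> exp (INR n * (w / (1 + w))) <= (1 + w) ^ n.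
Proof.
  intros Hw. rewrite exp_INR_mult. apply pow_incr. split; [apply Rlt_le, exp_pos|].
  assert (H := exp_ineq1_le (- (w / (1 + w)))).
  replace (1 + - (w / (1 + w))) with (/ (1 + w)) in H by (field; lra).
  rewrite exp_Ropp in H. apply Rinv_le_contravar in H; [|apply Rinv_0_lt_compat; lra].
  now rewrite !Rinv_inv in H.
Qed.

Lemma is_lim_seq_pow_one_plus (w : nat -> R) (l : R) :
  is_lim_seq (fun n => INR n * w n) l -> is_lim_seq (fun n => (1 + w n) ^ n) (exp l).
Proof.
  intros Hl.
  assert (Hw : is_lim_seq w 0).
  { apply is_lim_seq_incr_1.
    apply is_lim_seq_ext with (fun n => INR (S n) * w (S n) * (1 / INR (S n))).
    { intros n. field. apply not_0_INR. lia. }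
    replace (Finite 0) with (Finite (l * 0)) by (f_equal; ring).
    apply is_lim_seq_mult'; [|apply is_lim_seq_div_succ].
    exact (proj1 (is_lim_seq_incr_1 (fun n => INR n * w n) l) Hl). }
  assert (Hev : eventually (fun n => - / 2 < w n)).
  { apply is_lim_seq_spec in Hw. destruct (Hw (mkposreal (/ 2) ltac:(lra))) as [N HN].
    exists N. intros n Hn. specialize (HN n Hn). simpl in HN.
    rewrite Rminus_0_r in HN. apply Rabs_def2 in HN. lra. }
  assert (Hl' : is_lim_seq (fun n => INR n * (w n / (1 + w n))) l).
  { apply is_lim_seq_ext with (fun n => INR n * w n * / (1 + w n)).
    { intros n. unfold Rdiv. ring. }
    replace (Finite l) with (Finite (l * / (1 + 0))) by (f_equal; field).
    apply is_lim_seq_mult'; [exact Hl|].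
    apply (is_lim_seq_inv _ (Finite (1 + 0))).
    - apply is_lim_seq_plus'; [apply is_lim_seq_const | exact Hw].
    - simpl. intros H. injection H. lra. }
  apply is_lim_seq_le_le_loc with
    (fun n => exp (INR n * (w n / (1 + w n)))) (fun n => exp (INR n * w n)).
  - destruct Hev as [N HN]. exists N. intros n Hn. specialize (HN n Hn).
    split; [apply exp_le_pow | apply pow_le_exp]; lra.
  - apply is_lim_seq_continuous; [apply derivable_continuous_pt, derivable_pt_exp | exact Hl'].
  - apply is_lim_seq_continuous; [apply derivable_continuous_pt, derivable_pt_exp | exact Hl].
Qed.

Lemma is_lim_seq_exp_envelope sg p : 0 < p < 1 ->
  is_lim_seq (fun n => exp (- sg) * (/ (1 - sg / (INR (S n) * p))) ^ 2
                        * (1 - p + p * / (1 - sg / (INR (S n) * p))) ^ n) 1.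
Proof.
  intros Hp.
  set (a := fun n => sg / (INR (S n) * p)).
  set (y := fun n => / (1 - a n)).
  assert (Ha : is_lim_seq a 0).
  { apply is_lim_seq_ext with (fun n => (sg / p) / INR (S n)); [|apply is_lim_seq_div_succ].
    intros n. unfold a. field. split; [lra | apply not_0_INR; lia]. }
  assert (Hy : is_lim_seq y 1).
  { replace (Finite 1) with (Rbar_inv (Finite (1 - 0))) by (simpl; f_equal; field).
    apply is_lim_seq_inv.
    - apply is_lim_seq_minus'; [apply is_lim_seq_const | exact Ha].
    - simpl. intros H. injection H. lra. }
  assert (Hev : eventually (fun n => a n < 1)).
  { apply is_lim_seq_spec in Ha. destruct (Ha (mkposreal 1 Rlt_0_1)) as [N HN].
    exists N. intros n Hn. specialize (HN n Hn). simpl in HN.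
    rewrite Rminus_0_r in HN. apply Rabs_def2 in HN. lra. }
  assert (Hnw : is_lim_seq (fun n => INR n * (p * (y n - 1))) sg).
  { apply is_lim_seq_ext_loc with (fun n => INR n / INR (S n) * sg * y n).
    { destruct Hev as [N HN]. exists N. intros n Hn. specialize (HN n Hn).
      unfold y, a in *. assert (HSn : 0 < INR (S n)) by (apply lt_0_INR; lia).
      assert (HSnp : 0 < INR (S n) * p) by nra.
      assert (sg < INR (S n) * p).
      { apply (Rmult_lt_compat_r (INR (S n) * p)) in HN; [|lra].
        unfold Rdiv in HN. rewrite Rmult_assoc, Rinv_l, Rmult_1_r, Rmult_1_l in HN; lra. }
      field. repeat split; lra. }
    replace (Finite sg) with (Finite (1 * sg * 1)) by (f_equal; ring).
    apply is_lim_seq_mult'; [apply is_lim_seq_mult'|exact Hy].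
    - apply is_lim_seq_INR_div_succ.
    - apply is_lim_seq_const. }
  apply is_lim_seq_ext with (fun n => exp (- sg) * (y n * y n) * (1 + p * (y n - 1)) ^ n).
  { intros n. unfold y, a. simpl. f_equal; [f_equal; ring | f_equal; ring]. }
  replace (Finite 1) with (Finite (exp (- sg) * (1 * 1) * exp sg))
    by (f_equal; rewrite !Rmult_1_r, <- exp_plus, Rplus_opp_l; apply exp_0).
  apply is_lim_seq_mult'; [apply is_lim_seq_mult'|].
  - apply is_lim_seq_const.
  - now apply is_lim_seq_mult'.
  - now apply is_lim_seq_pow_one_plus.
Qed.

Lemma is_lim_seq_hyperbolic_envelope sg p : 0 < p < 1 ->
  is_lim_seq (fun n => 1 + sg * (1 - p) ^ S n) 1.
Proof.
  intros Hp.
  replace (Finite 1) with (Finite (1 + sg * 0)) by (f_equal; ring).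
  apply is_lim_seq_plus'; [apply is_lim_seq_const|].
  apply is_lim_seq_mult'; [apply is_lim_seq_const|].
  apply (is_lim_seq_incr_1 (fun n => (1 - p) ^ n)), is_lim_seq_geom.
  rewrite Rabs_pos_eq; lra.
Qed.

Lemma is_lim_seq_Rpower_0 (u : nat -> R) g : 0 < g -> (forall n, 0 < u n) ->
  is_lim_seq u 0 -> is_lim_seq (fun n => Rpower (u n) g) 0.
Proof.
  intros Hg Hu Hl. apply is_lim_seq_spec. apply is_lim_seq_spec in Hl.
  intros eps. set (d := Rpower eps (/ g)).
  destruct (Hl (mkposreal d (exp_pos _))) as [N HN]. exists N. intros n Hn.
  specialize (HN n Hn). specialize (Hu n). simpl in HN. rewrite Rminus_0_r in *.
  rewrite Rabs_pos_eq in HN by lra. rewrite Rabs_pos_eq by apply Rlt_le, exp_pos.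
  replace (pos eps) with (Rpower d g).
  - apply exp_increasing, Rmult_lt_compat_l; [lra | now apply ln_increasing].
  - assert (Heps := cond_pos eps).
    unfold d. rewrite Rpower_mult, Rinv_l, Rpower_1 by lra. reflexivity.
Qed.

(** * Asymptotics *)

Section Asymptotics.
Variables psi chi th q : R.
Hypothesis psi_gt0 : 0 < psi.
Hypothesis chi_gt0 : 0 < chi.
Hypothesis th_gt0 : 0 < th.
Hypothesis q_bounds : 0 < q < 1.

Let s := th - 1.
Let al := 1 + psi / 2.
Let be := chi / 2.
Let K := besselK th (sqrt (psi * chi)).
Let kap := Rpower (psi / chi) (th / 2) / (2 * K).
Let D := (2 + psi) * (2 + psi * (1 - q)) / (2 * q).
Let r := 1 - q.
Let x := q / al.
(* [q^(k+1) (1-q)^(n-k) = q (x+r)^n al^k p^k (1-p)^(n-k)] *)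
Let p := x / (x + r).

Lemma s_gt : -1 < s. Proof. unfold s; lra. Qed.
Lemma al_gt0 : 0 < al. Proof. unfold al; lra. Qed.
Lemma be_gt0 : 0 < be. Proof. unfold be; lra. Qed.
Lemma K_gt0 : 0 < K. Proof. apply besselK_pos; auto. apply sqrt_lt_R0. nra. Qed.
Lemma x_gt0 : 0 < x. Proof. apply Rdiv_lt_0_compat; [lra | apply al_gt0]. Qed.
Lemma p_bounds : 0 < p < 1.
Proof.
  assert (H := x_gt0). unfold p, r. split.
  - apply Rdiv_lt_0_compat; lra.
  - apply Rmult_lt_reg_r with (x + (1 - q)); [lra|]. field_simplify; lra.
Qed.

Definition gig_moment (k : nat) : R := int_0_inf (gig_integrand s al be k).

Lemma is_int_0_inf_gig_moment k : is_int_0_inf (gig_integrand s al be k) (gig_moment k).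
Proof.
  destruct (ex_is_int_0_inf_gig_integrand s al be s_gt al_gt0 be_gt0 k) as [v Hv].
  unfold gig_moment. now rewrite (int_0_inf_unique _ _ Hv).
Qed.

Lemma mixed_poisson_pmf_S k :
  mixed_poisson_pmf psi chi th (S k) = kap / INR (fact (S k)) * gig_moment k.
Proof.
  unfold mixed_poisson_pmf. apply int_0_inf_unique.
  apply is_int_0_inf_ext with (fun l => kap / INR (fact (S k)) * gig_integrand s al be k l).
  2: apply is_int_0_inf_scal, is_int_0_inf_gig_moment.
  intros l Hl. unfold gig_integrand, gig_density, kap, K, s, al, be.
  replace (exp (- (chi / l + psi * l) / 2))
    with (exp (- ((1 + psi / 2) * l)) * exp (- (chi / 2 / l)) * / exp (- l))
    by (rewrite <- exp_Ropp, <- !exp_plus; f_equal; field; lra).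
  assert (HK := K_gt0). unfold K in HK. assert (Hf := INR_fact_neq_0 (S k)).
  field. repeat split; try lra; apply Rgt_not_eq, exp_pos.
Qed.

Definition binom_weight (n k : nat) : R := binom n k * p ^ k * (1 - p) ^ (n - k).
Definition moment_scale (k : nat) : R := al ^ S (S k) / INR (fact (S k)).
Definition scale (n : nat) : R := al / (INR (S n) * p).
Definition normalized_pmf (n : nat) : R :=
  Rpower (scale n) s * sum_f_R0 (fun k => binom_weight n k * moment_scale k * gig_moment k) n.

Lemma scale_gt0 n : 0 < scale n.
Proof.
  assert (H := p_bounds). assert (0 < INR (S n)) by (apply lt_0_INR; lia).
  apply Rdiv_lt_0_compat; [apply al_gt0 | nra].
Qed.

Lemma compound_pmf_S_normalized n : compound_pmf psi chi th q (S n) =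
  kap * q * (x + r) ^ n / al ^ 2 * Rpower (scale n) (- s) * normalized_pmf n.
Proof.
  unfold normalized_pmf.
  rewrite <- Rmult_assoc, (Rmult_assoc _ (Rpower (scale n) (- s))),
    Rpower_opp_mult_Rpower, Rmult_1_r by apply scale_gt0.
  rewrite compound_pmf_S, scal_sum. apply sum_eq. intros k Hk.
  rewrite mixed_poisson_pmf_S. unfold binom_weight, moment_scale.
  assert (Hal := al_gt0). assert (Hx := x_gt0). assert (Hp := p_bounds).
  assert (Hxr : 0 < x + r) by (unfold r; lra).
  replace (q ^ S k) with (q * al ^ k * (p ^ k * (x + r) ^ k)).
  2: { rewrite <- Rpow_mult_distr. replace (p * (x + r)) with x by (unfold p; field; lra).
       rewrite Rmult_assoc, <- Rpow_mult_distr. unfold x.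
       replace (al * (q / al)) with q by (field; lra). reflexivity. }
  replace ((1 - q) ^ (n - k)) with ((1 - p) ^ (n - k) * (x + r) ^ (n - k))
    by (rewrite <- Rpow_mult_distr; f_equal; unfold p, r in *; field; lra).
  replace ((x + r) ^ n) with ((x + r) ^ k * (x + r) ^ (n - k))
    by (rewrite <- pow_add; f_equal; lia).
  assert (Hf := INR_fact_neq_0 (S k)).
  simpl pow. field. repeat split; auto; lra.
Qed.

Lemma D_gt0 : 0 < D.
Proof. apply Rdiv_lt_0_compat; [apply Rmult_lt_0_compat; nra | lra]. Qed.

Lemma scale_eq n : scale n = D / (2 * INR (S n)).
Proof.
  assert (Hx := x_gt0). assert (0 < INR (S n)) by (apply lt_0_INR; lia).
  unfold scale, D, p, x, r, al. field. repeat split; nra.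
Qed.

Lemma q_div_al_sqr : q / al ^ 2 = 2 / D * (x + r).
Proof. assert (Hx := x_gt0). unfold D, x, r, al. field. repeat split; nra. Qed.

Lemma inv_z1_eq : 1 - psi * q / (2 + psi) = x + r.
Proof. unfold x, r, al. field. lra. Qed.

Lemma C_mult_Rpower_chi :
  Rpower psi (th / 2) / besselK th (sqrt (chi * psi)) * Rpower chi (- th / 2) = 2 * kap.
Proof.
  assert (HK := K_gt0). unfold kap, K in *. rewrite Rpower_div, (Rmult_comm chi psi) by lra.
  replace (- th / 2) with (- (th / 2)) by field. field. lra.
Qed.

Lemma normalized_pmf_eq n :
  compound_pmf psi chi th q (S n) /
  (Rpower psi (th / 2) / besselK th (sqrt (chi * psi)) * Rpower chi (- th / 2) * Rpower D (- th)
   * Rpower (2 * INR (S n)) (th - 1) * / (/ (1 - psi * q / (2 + psi))) ^ S n) = normalized_pmf n.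
Proof.
  assert (HD := D_gt0). assert (Hx := x_gt0). assert (HK := K_gt0). assert (Hal := al_gt0).
  assert (HSn : 0 < INR (S n)) by (apply lt_0_INR; lia).
  assert (Hkap : 0 < kap) by (apply Rdiv_lt_0_compat; [apply exp_pos | lra]).
  rewrite C_mult_Rpower_chi, inv_z1_eq, pow_inv, Rinv_inv, compound_pmf_S_normalized,
    scale_eq, Rpower_div, Ropp_involutive by lra.
  replace (- th) with (- s + - (1)) by (unfold s; ring).
  rewrite Rpower_plus, (Rpower_Ropp D 1), Rpower_1 by lra.
  replace (kap * q * (x + r) ^ n / al ^ 2) with (kap * (x + r) ^ n * (q / al ^ 2)) by (field; lra).
  rewrite q_div_al_sqr. fold s. simpl pow.
  assert (0 < Rpower D (- s)) by apply exp_pos.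
  assert (0 < Rpower (2 * INR (S n)) s) by apply exp_pos.
  assert (Hxr : 0 < x + r) by (unfold r; lra).
  field. repeat split; try lra. apply pow_nonzero. lra.
Qed.

Definition exp_envelope_sum (sg : R) (n : nat) : R :=
  exp (- sg) * (/ (1 - sg / (INR (S n) * p))) ^ 2
  * (1 - p + p * / (1 - sg / (INR (S n) * p))) ^ n.
Definition hyperbolic_envelope_sum (sg : R) (n : nat) : R := 1 + sg * (1 - p) ^ S n.
Definition upper_envelope_sum (sg : R) (n : nat) : R :=
  if Rle_dec 0 sg then exp_envelope_sum sg n else hyperbolic_envelope_sum sg n.
Definition lower_envelope_sum (sg : R) (n : nat) : R :=
  if Rle_dec 0 sg then hyperbolic_envelope_sum sg n else exp_envelope_sum sg n.

Lemma sum_binom_weight n : sum_f_R0 (binom_weight n) n = 1.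
Proof.
  unfold binom_weight. rewrite binomial_binom. replace (p + (1 - p)) with 1 by ring. apply pow1.
Qed.

Lemma sum_hyperbolic_moments sg n :
  sum_f_R0 (fun k => binom_weight n k * (moment_scale k * hyperbolic_moment al sg (scale n) k)) n
  = hyperbolic_envelope_sum sg n.
Proof.
  assert (Hp := p_bounds). assert (Hal := al_gt0).
  assert (HSn : 0 < INR (S n)) by (apply lt_0_INR; lia).
  transitivity (sum_f_R0 (fun k => binom_weight n k * (1 + sg)
                                   + binom_weight n k / INR (S k) * (- sg * INR (S n) * p)) n).
  { apply sum_eq. intros k Hk. unfold moment_scale, hyperbolic_moment, scale.
    change (fact (S k)) with (S k * fact k)%nat. rewrite mult_INR.
    assert (0 < INR (S k)) by (apply lt_0_INR; lia). assert (Hf := INR_fact_neq_0 k).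
    simpl pow. field. repeat split; try lra. apply pow_nonzero; lra. }
  rewrite sum_plus, <- !scal_sum, sum_binom_weight.
  unfold binom_weight. rewrite sum_binom_div_succ by lra.
  unfold hyperbolic_envelope_sum. field. lra.
Qed.

Lemma sum_exp_moments sg n : sg * scale n < al ->
  sum_f_R0 (fun k => binom_weight n k * (moment_scale k * exp_moment al sg (scale n) k)) n
  = exp_envelope_sum sg n.
Proof.
  intros Hsc. assert (Hp := p_bounds). assert (Hal := al_gt0).
  assert (HSn : 0 < INR (S n)) by (apply lt_0_INR; lia).
  assert (Hy : al - sg * scale n = al * (1 - sg / (INR (S n) * p)))
    by (unfold scale; field; lra).
  assert (Hy2 : 0 < 1 - sg / (INR (S n) * p)).
  { assert (0 < al - sg * scale n) by lra. rewrite Hy in H. nra. }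
  unfold exp_envelope_sum. rewrite Rmult_assoc, <- sum_binom_pow, scal_sum.
  apply sum_eq. intros k Hk. unfold binom_weight, moment_scale, exp_moment.
  rewrite Hy, Rpow_mult_distr, pow_inv.
  assert (Hf := INR_fact_neq_0 (S k)).
  field. repeat split; try lra; apply pow_nonzero; lra.
Qed.

Lemma sum_upper_moments sg n : sg * scale n < al ->
  sum_f_R0 (fun k => binom_weight n k * (moment_scale k * upper_moment al sg (scale n) k)) n
  = upper_envelope_sum sg n.
Proof.
  intros H. unfold upper_moment, upper_envelope_sum. destruct (Rle_dec 0 sg).
  - now apply sum_exp_moments.
  - apply sum_hyperbolic_moments.
Qed.

Lemma sum_lower_moments sg n : sg * scale n < al ->
  sum_f_R0 (fun k => binom_weight n k * (moment_scale k * lower_moment al sg (scale n) k)) n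
  = lower_envelope_sum sg n.
Proof.
  intros H. unfold lower_moment, lower_envelope_sum. destruct (Rle_dec 0 sg).
  - apply sum_hyperbolic_moments.
  - now apply sum_exp_moments.
Qed.

Lemma binom_weight_moment_scale_ge0 n k : 0 <= binom_weight n k * moment_scale k.
Proof.
  assert (Hp := p_bounds). assert (Hal := al_gt0). unfold binom_weight, moment_scale.
  apply Rmult_le_pos; [apply Rmult_le_pos; [apply Rmult_le_pos|]|].
  - apply binom_ge0.
  - apply pow_le; lra.
  - apply pow_le; lra.
  - apply Rlt_le, Rdiv_lt_0_compat; [now apply pow_lt | apply lt_0_INR, lt_O_fact].
Qed.

Lemma sum_rescaled_moments n (u : nat -> R) :
  Rpower (scale n) s
  * sum_f_R0 (fun k => binom_weight n k * moment_scale k * (Rpower (scale n) (- s) * u k)) n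
  = sum_f_R0 (fun k => binom_weight n k * (moment_scale k * u k)) n.
Proof.
  rewrite scal_sum. apply sum_eq. intros k Hk.
  rewrite <- (Rmult_1_r (u k)) at 2.
  rewrite <- (Rpower_opp_mult_Rpower (scale n) s (scale_gt0 n)). ring.
Qed.

Lemma normalized_pmf_le n (u : nat -> R) :
  (forall k, gig_moment k <= Rpower (scale n) (- s) * u k) ->
  normalized_pmf n <= sum_f_R0 (fun k => binom_weight n k * (moment_scale k * u k)) n.
Proof.
  intros Hu. rewrite <- sum_rescaled_moments. unfold normalized_pmf.
  apply Rmult_le_compat_l; [apply Rlt_le, exp_pos|].
  apply sum_Rle. intros k Hk. apply Rmult_le_compat_l; auto.
  apply binom_weight_moment_scale_ge0.
Qed.

Lemma normalized_pmf_ge n (u : nat -> R) :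
  (forall k, Rpower (scale n) (- s) * u k <= gig_moment k) ->
  sum_f_R0 (fun k => binom_weight n k * (moment_scale k * u k)) n <= normalized_pmf n.
Proof.
  intros Hu. rewrite <- sum_rescaled_moments. unfold normalized_pmf.
  apply Rmult_le_compat_l; [apply Rlt_le, exp_pos|].
  apply sum_Rle. intros k Hk. apply Rmult_le_compat_l; auto.
  apply binom_weight_moment_scale_ge0.
Qed.

Let g := shift_exponent s.

Lemma normalized_pmf_le_upper n : s * scale n < al -> normalized_pmf n <= upper_envelope_sum s n.
Proof.
  intros Hsc. rewrite <- sum_upper_moments by exact Hsc. apply normalized_pmf_le. intros k.
  apply (gig_integral_le s al be);
    auto using s_gt, al_gt0, be_gt0, scale_gt0, is_int_0_inf_gig_moment.
Qed.

Lemma lower_le_normalized_pmf n : s * scale n < al ->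
  lower_envelope_sum s n - Rpower (be * scale n) g * upper_envelope_sum (s - g) n
  <= normalized_pmf n.
Proof.
  intros Hsc.
  assert (Hsgc : (s - g) * scale n < al).
  { assert (H := shift_exponent_bounds s s_gt). assert (H' := scale_gt0 n). unfold g. nra. }
  set (u := fun k =>
    lower_moment al s (scale n) k - Rpower (be * scale n) g * upper_moment al (s - g) (scale n) k).
  apply Rle_trans with (sum_f_R0 (fun k => binom_weight n k * (moment_scale k * u k)) n).
  - right. rewrite <- sum_lower_moments, <- sum_upper_moments, scal_sum, <- minus_sum
      by assumption.
    apply sum_eq. intros k Hk. unfold u. ring.
  - apply normalized_pmf_ge. intros k. apply gig_integral_ge;
      auto using s_gt, al_gt0, be_gt0, scale_gt0, is_int_0_inf_gig_moment.
Qed.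

Lemma is_lim_seq_upper_envelope_sum sg : is_lim_seq (upper_envelope_sum sg) 1.
Proof.
  unfold upper_envelope_sum. destruct (Rle_dec 0 sg).
  - apply is_lim_seq_exp_envelope, p_bounds.
  - apply is_lim_seq_hyperbolic_envelope, p_bounds.
Qed.

Lemma is_lim_seq_lower_envelope_sum sg : is_lim_seq (lower_envelope_sum sg) 1.
Proof.
  unfold lower_envelope_sum. destruct (Rle_dec 0 sg).
  - apply is_lim_seq_hyperbolic_envelope, p_bounds.
  - apply is_lim_seq_exp_envelope, p_bounds.
Qed.

Lemma is_lim_seq_scale : is_lim_seq scale 0.
Proof.
  assert (Hp := p_bounds).
  apply is_lim_seq_ext with (fun n => (al / p) / INR (S n)); [|apply is_lim_seq_div_succ].
  intros n. unfold scale. field. split; [lra | apply not_0_INR; lia].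
Qed.

Lemma eventually_scale_small : eventually (fun n => s * scale n < al).
Proof.
  assert (H : is_lim_seq (fun n => s * scale n) (s * 0)).
  { apply (is_lim_seq_scal_l scale s 0), is_lim_seq_scale. }
  rewrite Rmult_0_r in H. apply is_lim_seq_spec in H.
  destruct (H (mkposreal al al_gt0)) as [N HN]. exists N. intros n Hn.
  specialize (HN n Hn). simpl in HN. rewrite Rminus_0_r in HN. apply Rabs_def2 in HN. lra.
Qed.

Lemma is_lim_seq_normalized_pmf : is_lim_seq normalized_pmf 1.
Proof.
  assert (Hcorr : is_lim_seq (fun n => Rpower (be * scale n) g) 0).
  { apply is_lim_seq_Rpower_0.
    - apply shift_exponent_bounds, s_gt.
    - intros n. apply Rmult_lt_0_compat; [apply be_gt0 | apply scale_gt0].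
    - replace (Finite 0) with (Rbar_mult be 0) by (simpl; f_equal; ring).
      apply is_lim_seq_scal_l, is_lim_seq_scale. }
  apply is_lim_seq_le_le_loc with
    (fun n => lower_envelope_sum s n - Rpower (be * scale n) g * upper_envelope_sum (s - g) n)
    (upper_envelope_sum s).
  - destruct eventually_scale_small as [N HN]. exists N. intros n Hn.
    split; [apply lower_le_normalized_pmf | apply normalized_pmf_le_upper]; auto.
  - replace (Finite 1) with (Finite (1 - 0 * 1)) by (f_equal; ring).
    apply is_lim_seq_minus'; [apply is_lim_seq_lower_envelope_sum|].
    apply is_lim_seq_mult'; [exact Hcorr | apply is_lim_seq_upper_envelope_sum].
  - apply is_lim_seq_upper_envelope_sum.
Qed.
End Asymptotics.

Theorem proposition3 (psi chi th q : R) :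
  0 < psi -> 0 < chi -> 0 < th -> 0 < q < 1 ->
  let C := Rpower psi (th / 2) / besselK th (sqrt (chi * psi)) in
  let z1 := / (1 - psi * q / (2 + psi)) in
  let D := (2 + psi) * (2 + psi * (1 - q)) / (2 * q) in
  is_lim_seq
    (fun n : nat =>
       compound_pmf psi chi th q n /
       (C * Rpower chi (- th / 2) * Rpower D (- th)
          * Rpower (2 * INR n) (th - 1) * / z1 ^ n))
    1.
Proof.
  intros Hpsi Hchi Hth Hq C z1 D.
  apply is_lim_seq_incr_1.
  apply is_lim_seq_ext with (normalized_pmf psi chi th q).
  - intros n. symmetry. apply normalized_pmf_eq; auto.
  - now apply is_lim_seq_normalized_pmf.
Qed.
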